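(* Let $n\ge2$. The group $VSPG_n$ is generated by $\{\mu_{ij},\gamma_{ij}\mid 1\le i\ne j\le n\}$ subject to the defining relations (where distinct letters denote distinct indices in $\{1,\dots,n\}$): $\mu_{ij}\mu_{ik}\mu_{jk}=\mu_{jk}\mu_{ik}\mu_{ij}$; $\mu_{ij}\mu_{ik}\gamma_{jk}=\gamma_{jk}\mu_{ik}\mu_{ij}$; $\gamma_{ij}\mu_{ik}\mu_{jk}=\mu_{jk}\mu_{ik}\gamma_{ij}$; $\mu_{ij}\gamma_{ji}=\gamma_{ij}\mu_{ji}$; $\mu_{ij}\mu_{kl}=\mu_{kl}\mu_{ij}$, $\gamma_{ij}\gamma_{kl}=\gamma_{kl}\gamma_{ij}$, $\mu_{ij}\gamma_{kl}=\gamma_{kl}\mu_{ij}$.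
   Context: Let $n\ge 2$. $VSG_n$ is the group generated by $\sigma_i,v_i,\tau_i$ ($1\le i\le n-1$) subject to: $v_i^2=1$; $\sigma_i\tau_i=\tau_i\sigma_i$; for $|i-j|=1$: $\sigma_i\sigma_j\sigma_i=\sigma_j\sigma_i\sigma_j$, $v_iv_jv_i=v_jv_iv_j$, $v_i\sigma_jv_i=v_j\sigma_iv_j$, $v_i\tau_jv_i=v_j\tau_iv_j$, $\sigma_i\sigma_j\tau_i=\tau_j\sigma_i\sigma_j$; for $|i-j|>1$: $g_ih_j=h_jg_i$ for $g_i,h_i\in\{\sigma_i,\tau_i,v_i\}$. Let $\pi:VSG_n\to S_n$ be the homomorphism with $\pi(\sigma_i)=\pi(v_i)=\pi(\tau_i)=(i,i+1)$, and $VSPG_n:=\ker\pi$. Elementary fusing strings: $\mu_{i,i+1}:=\sigma_iv_i$, $\gamma_{i,i+1}:=\tau_iv_i$. Generalized fusing strings: for $1\le i<j\le n$, $\mu_{ij}:=(v_{j-1}\cdots v_{i+1})\mu_{i,i+1}(v_{i+1}\cdots v_{j-1})$, $\gamma_{ij}:=(v_{j-1}\cdots v_{i+1})\gamma_{i,i+1}(v_{i+1}\cdots v_{j-1})$, $\mu_{ji}:=(v_{j-1}\cdots v_{i+1})v_i\mu_{i,i+1}v_i(v_{i+1}\cdots v_{j-1})$, $\gamma_{ji}:=(v_{j-1}\cdots v_{i+1})v_i\gamma_{i,i+1}v_i(v_{i+1}\cdots v_{j-1})$. *)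

(* Finitely presented groups are encoded by their
   word problem: words over a generator alphabet (letters with an inverse flag)
   modulo the congruence generated by free cancellation and the relators. *)
From mathcomp Require Import all_boot.
Set Implicit Arguments. Unset Strict Implicit. Unset Printing Implicit Defensive.

(* a letter (g, false) is the generator g, (g, true) is g^-1 *)
Definition word (G : Type) := seq (G * bool).

Definition winv (G : Type) (w : word G) : word G :=
  rev (map (fun l => (l.1, ~~ l.2)) w).

Inductive cong (G : Type) (R : word G -> word G -> Prop) : word G -> word G -> Prop :=
| cong_rel u v : R u v -> cong R u v
| cong_free g b : cong R [:: (g, b); (g, ~~ b)] [::]
| cong_refl u : cong R u u
| cong_sym u v : cong R u v -> cong R v u
| cong_trans u v w : cong R u v -> cong R v w -> cong R u w
| cong_cat u u' v v' : cong R u u' -> cong R v v' -> cong R (u ++ v) (u' ++ v').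

Definition pw (G : Type) (s : seq G) : word G := map (fun g => (g, false)) s.

Inductive gen1 := Sg of nat | Vg of nat | Tg of nat.

Definition idx1 (g : gen1) : nat := match g with Sg i | Vg i | Tg i => i end.

Definition valid1 (n i : nat) : bool := (0 < i) && (i < n).
Definition adj (i j : nat) : bool := (i.+1 == j) || (j.+1 == i).
Definition far (i j : nat) : bool := (i.+1 < j) || (j.+1 < i).

Definition wf1 (n : nat) (w : word gen1) : bool := all (fun l => valid1 n (idx1 l.1)) w.

Inductive rel1 (n : nat) : word gen1 -> word gen1 -> Prop :=
| r1_vv i : valid1 n i -> rel1 n (pw [:: Vg i; Vg i]) [::]
| r1_st i : valid1 n i -> rel1 n (pw [:: Sg i; Tg i]) (pw [:: Tg i; Sg i])
| r1_sss i j : valid1 n i -> valid1 n j -> adj i j ->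
    rel1 n (pw [:: Sg i; Sg j; Sg i]) (pw [:: Sg j; Sg i; Sg j])
| r1_vvv i j : valid1 n i -> valid1 n j -> adj i j ->
    rel1 n (pw [:: Vg i; Vg j; Vg i]) (pw [:: Vg j; Vg i; Vg j])
| r1_vsv i j : valid1 n i -> valid1 n j -> adj i j ->
    rel1 n (pw [:: Vg i; Sg j; Vg i]) (pw [:: Vg j; Sg i; Vg j])
| r1_vtv i j : valid1 n i -> valid1 n j -> adj i j ->
    rel1 n (pw [:: Vg i; Tg j; Vg i]) (pw [:: Vg j; Tg i; Vg j])
| r1_sst i j : valid1 n i -> valid1 n j -> adj i j ->
    rel1 n (pw [:: Sg i; Sg j; Tg i]) (pw [:: Tg j; Sg i; Sg j])
| r1_far g h : valid1 n (idx1 g) -> valid1 n (idx1 h) -> far (idx1 g) (idx1 h) ->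
    rel1 n (pw [:: g; h]) (pw [:: h; g]).

(* the homomorphism pi : VSG_n -> S_n, S_n realised as permutations of nat
   supported in {1,...,n}; every generator with index i maps to (i, i+1) *)
Definition swap (i k : nat) : nat :=
  if k == i then i.+1 else if k == i.+1 then i else k.

Definition piw (w : word gen1) : nat -> nat :=
  foldr (fun l f => swap (idx1 l.1) \o f) id w.

(* w represents an element of VSPG_n = ker pi *)
Definition in_ker (w : word gen1) : Prop := forall k, piw w k = k.

Inductive gen2 := Mu of nat & nat | Ga of nat & nat.

Definition valid2 (n : nat) (g : gen2) : bool :=
  match g with
  | Mu i j | Ga i j => [&& 0 < i, i <= n, 0 < j, j <= n & i != j]
  end.

Definition wf2 (n : nat) (w : word gen2) : bool := all (fun l => valid2 n l.1) w.

Definition dist3 (i j k : nat) : bool := [&& i != j, i != k & j != k].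
Definition dist4 (i j k l : nat) : bool :=
  [&& dist3 i j k, i != l, j != l & k != l].
Definition valid_ix (n i : nat) : bool := (0 < i) && (i <= n).

Inductive rel2 (n : nat) : word gen2 -> word gen2 -> Prop :=
| r2_mmm i j k : valid_ix n i -> valid_ix n j -> valid_ix n k -> dist3 i j k ->
    rel2 n (pw [:: Mu i j; Mu i k; Mu j k]) (pw [:: Mu j k; Mu i k; Mu i j])
| r2_mmg i j k : valid_ix n i -> valid_ix n j -> valid_ix n k -> dist3 i j k ->
    rel2 n (pw [:: Mu i j; Mu i k; Ga j k]) (pw [:: Ga j k; Mu i k; Mu i j])
| r2_gmm i j k : valid_ix n i -> valid_ix n j -> valid_ix n k -> dist3 i j k ->
    rel2 n (pw [:: Ga i j; Mu i k; Mu j k]) (pw [:: Mu j k; Mu i k; Ga i j])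
| r2_mg i j : valid_ix n i -> valid_ix n j -> i != j ->
    rel2 n (pw [:: Mu i j; Ga j i]) (pw [:: Ga i j; Mu j i])
| r2_mumu i j k l : valid_ix n i -> valid_ix n j -> valid_ix n k -> valid_ix n l ->
    dist4 i j k l -> rel2 n (pw [:: Mu i j; Mu k l]) (pw [:: Mu k l; Mu i j])
| r2_gaga i j k l : valid_ix n i -> valid_ix n j -> valid_ix n k -> valid_ix n l ->
    dist4 i j k l -> rel2 n (pw [:: Ga i j; Ga k l]) (pw [:: Ga k l; Ga i j])
| r2_muga i j k l : valid_ix n i -> valid_ix n j -> valid_ix n k -> valid_ix n l ->
    dist4 i j k l -> rel2 n (pw [:: Mu i j; Ga k l]) (pw [:: Ga k l; Mu i j]).

Definition vup (i j : nat) : seq gen1 := map Vg (iota i.+1 (j - i.+1)).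
Definition vdown (i j : nat) : seq gen1 := rev (vup i j).

(* for i < j:  mu_ij, gamma_ij, mu_ji, gamma_ji as in the paper *)
Definition fus_lt (X : nat -> gen1) (i j : nat) : seq gen1 :=
  vdown i j ++ [:: X i; Vg i] ++ vup i j.
Definition fus_gt (X : nat -> gen1) (i j : nat) : seq gen1 :=
  vdown i j ++ [:: Vg i; X i; Vg i; Vg i] ++ vup i j.

Definition fusing (g : gen2) : seq gen1 :=
  match g with
  | Mu a b => if a < b then fus_lt Sg a b else fus_gt Sg b a
  | Ga a b => if a < b then fus_lt Tg a b else fus_gt Tg b a
  end.

Definition ev_letter (l : gen2 * bool) : word gen1 :=
  if l.2 then winv (pw (fusing l.1)) else pw (fusing l.1).

(* substitution of the fusing strings: the natural map <gen2 | rel2> -> VSG_n *)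
Definition ev (w : word gen2) : word gen1 := flatten (map ev_letter w).

(* [ev] sends generators to fusing strings, whose permutation is trivial, so it lands in
   VSPG_n.  Reading a word of VSG_n letter by letter while tracking the permutation of
   the prefix read so far turns sigma_i, tau_i into the mu, gamma of the two strands they
   join and drops v_i (Reidemeister--Schreier rewriting [rs]).  This rewriting maps
   relations of VSG_n to relations of VSPG_n and undoes [ev], so [ev] is injective.
   Conversely every word equals [ev (rs w)] followed by the v-word of its permutation:
   conjugating a fusing string by v's relabels its strands.  Relabelling the rewritten
   relations of VSG_n yields all relations of VSPG_n, so [ev] is well defined; and for
   [w] in the kernel the trailing v-word is trivial since the v_i satisfy the Coxeter
   presentation of S_n, so [ev] is onto VSPG_n. *)

From mathcomp Require Import all_boot zify.
From Stdlib Require Import FunctionalExtensionality.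

Set Implicit Arguments. Unset Strict Implicit. Unset Printing Implicit Defensive.

Section Presentation.
Variables (G : Type) (R : word G -> word G -> Prop).
Local Notation C := (cong R).

Lemma cong_ctx a b u v : C u v -> C (a ++ u ++ b) (a ++ v ++ b).
Proof. by move=> h; do 2![apply: cong_cat => //; first exact: cong_refl]; exact: cong_refl. Qed.

Lemma cong_ctxE a b u v w1 w2 :
  w1 = a ++ u ++ b -> w2 = a ++ v ++ b -> C u v -> C w1 w2.
Proof. by move=> -> -> /cong_ctx. Qed.

Lemma winv_cat (u v : word G) : winv (u ++ v) = winv v ++ winv u.
Proof. by rewrite /winv map_cat rev_cat. Qed.

Lemma winv_cons (l : G * bool) (w : word G) : winv (l :: w) = winv w ++ [:: (l.1, ~~ l.2)].
Proof. by rewrite /winv /= rev_cons cats1. Qed.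

Lemma winvK : involutive (@winv G).
Proof.
by move=> w; rewrite /winv map_rev revK -map_comp; elim: w => //= -[g b] w ->; rewrite negbK.
Qed.

Lemma cong_mulV (w : word G) : C (w ++ winv w) [::].
Proof.
elim: w => [|[g b] w IH] /=; first exact: cong_refl.
rewrite winv_cons; apply: (cong_trans (v := [:: (g, b)] ++ [::] ++ [:: (g, ~~ b)])).
  by apply: (cong_ctxE (a := [:: (g, b)]) (b := [:: (g, ~~ b)]) _ _ IH); rewrite //= catA.
exact: cong_free.
Qed.

Lemma cong_Vmul (w : word G) : C (winv w ++ w) [::].
Proof. by rewrite -{2}(winvK w); exact: cong_mulV. Qed.

Lemma cong_winv u v : C u v -> C (winv u) (winv v).
Proof.
move=> h; apply: (cong_trans (v := winv u ++ (v ++ winv v))).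
  by apply: (cong_ctxE (a := winv u) (b := [::]) _ _ (cong_sym (cong_mulV v))); rewrite ?cats0.
apply: (cong_trans (v := (winv u ++ u) ++ winv v)).
  by apply: (cong_ctxE (a := winv u) (b := winv v) _ _ (cong_sym h)); rewrite ?catA.
by apply: (cong_ctxE (a := [::]) (b := winv v) _ _ (cong_Vmul u)).
Qed.

Lemma cong_mulVr u v t : C u (v ++ t) -> C v (u ++ winv t).
Proof.
move=> h; apply: (cong_trans (v := v ++ t ++ winv t)).
  by apply: (cong_ctxE (a := v) (b := [::]) _ _ (cong_sym (cong_mulV t))); rewrite ?cats0.
by rewrite catA; apply: (cong_ctxE (a := [::]) (b := winv t) _ _ (cong_sym h)).
Qed.

End Presentation.

Lemma pw_cat (G : Type) (u v : seq G) : pw (u ++ v) = pw u ++ pw v.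
Proof. by rewrite /pw map_cat. Qed.

Ltac case_swap := rewrite /swap; repeat match goal with
  |- context [?a == ?b] => lazymatch a with context [if _ then _ else _] => fail | _ =>
     lazymatch b with context [if _ then _ else _] => fail | _ =>
       case: (@eqP _ a b) => ? end end end.

Lemma swapK i : involutive (swap i).
Proof. by move=> k; case_swap; lia. Qed.

Lemma swap_inj i : injective (swap i).
Proof. exact: inv_inj (swapK i). Qed.

Lemma swap_id i k : k != i -> k != i.+1 -> swap i k = k.
Proof. by rewrite /swap => /negbTE -> /negbTE ->. Qed.

Lemma swap_braid i k : swap i (swap i.+1 (swap i k)) = swap i.+1 (swap i (swap i.+1 k)).
Proof. by case_swap; lia. Qed.

Lemma swap_far i j k : far i j -> swap i (swap j k) = swap j (swap i k).
Proof. by rewrite /far => h; case_swap; lia. Qed.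

Lemma swap_lt k a b : a < b -> ~~ ((k == a) && (b == a.+1)) -> swap k a < swap k b.
Proof. by move=> hab hk; case_swap; lia. Qed.

Lemma swap_iE i x : x = i -> swap i x = i.+1.
Proof. by move=> ->; rewrite /swap eqxx. Qed.
Lemma swap_iSE i x : x = i.+1 -> swap i x = i.
Proof. by move=> ->; case_swap; lia. Qed.
Lemma swap_idE i x : x <> i -> x <> i.+1 -> swap i x = x.
Proof. by move=> /eqP h1 /eqP h2; exact: swap_id. Qed.

(* Evaluates every [swap i x] whose case is decided by [lia] from the context. *)
Ltac eval_swap := repeat match goal with |- context [swap ?i ?x] =>
  first [ rewrite (@swap_iE i x); last by lia | rewrite (@swap_iSE i x); last by lia
        | rewrite (@swap_idE i x); [|lia|lia] ] end.

Definition swaps (s : seq nat) (x : nat) : nat := foldr swap x s.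

Lemma swaps_cat s1 s2 x : swaps (s1 ++ s2) x = swaps s1 (swaps s2 x).
Proof. by rewrite /swaps foldr_cat. Qed.

Lemma swaps_rcons s i x : swaps (rcons s i) x = swaps s (swap i x).
Proof. by rewrite -cats1 swaps_cat. Qed.

Lemma swaps_revK s x : swaps (rev s) (swaps s x) = x.
Proof. by elim: s x => //= k s IH x; rewrite rev_cons swaps_rcons swapK. Qed.

Lemma swaps_Krev s x : swaps s (swaps (rev s) x) = x.
Proof. by rewrite -{1}(revK s) swaps_revK. Qed.

Lemma swaps_id s x : all (fun k => (x < k) || (k.+1 < x)) s -> swaps s x = x.
Proof. by elim: s => //= k s IH /andP [hk hs]; rewrite IH // swap_id //; apply/eqP; lia. Qed.

Lemma swaps_iota a m : swaps (rev (iota a m)) a = a + m.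
Proof.
elim: m => [|m IH]; first by rewrite addn0.
by rewrite -addn1 iotaD rev_cat swaps_cat /= IH swap_iE; lia.
Qed.

Lemma swaps_iota_lt a m x : x < a -> swaps (rev (iota a m)) x = x.
Proof. by move=> h; apply: swaps_id; apply/allP => k; rewrite mem_rev mem_iota; lia. Qed.

(** * Reidemeister--Schreier rewriting *)

Definition vword (s : seq nat) : word gen1 := pw (map Vg s).

Lemma adjP i j : adj i j -> j = i.+1 \/ i = j.+1.
Proof. by rewrite /adj => /orP [] /eqP ->; [left|right]. Qed.

Section Rewriting.
Variable n : nat.

Definition track (p : nat -> nat) (l : gen1 * bool) : nat -> nat :=
  if valid1 n (idx1 l.1) then p \o swap (idx1 l.1) else p.

Definition track_word (p : nat -> nat) (w : word gen1) : nat -> nat := foldl track p w.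

Lemma track_word_cat p u v : track_word p (u ++ v) = track_word (track_word p u) v.
Proof. exact: foldl_cat. Qed.

Lemma track_word_cons p l w : track_word p (l :: w) = track_word (track p l) w.
Proof. by []. Qed.

Lemma track_word_cong w w' : cong (rel1 n) w w' -> forall p, track_word p w = track_word p w'.
Proof.
elim=> {w w'} //.
- move=> u v hr p; case: hr => [i hi|i hi|i j hi hj /adjP[]?|i j hi hj /adjP[]?
      |i j hi hj /adjP[]?|i j hi hj /adjP[]?|i j hi hj /adjP[]?|g h hi hj hf];
    subst; rewrite /track_word /= /track /= ?hi ?hj //;
    apply: functional_extensionality => x /=; by rewrite ?swapK ?swap_braid // swap_far.
- move=> g b p; rewrite /track_word /= /track /=; case: (valid1 n (idx1 g)) => //=.
  by apply: functional_extensionality => x /=; rewrite swapK.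
- by move=> u v w _ IH1 _ IH2 p; rewrite IH1.
- by move=> u u' v v' _ IH1 _ IH2 p; rewrite !track_word_cat IH1 IH2.
Qed.

(* The state [p] is the permutation of the prefix read so far: sigma_i and tau_i become
   mu and gamma of the strands [p i], [p i.+1], and v_i disappears. *)
Definition rs_letter (p : nat -> nat) (l : gen1 * bool) : word gen2 :=
  if valid1 n (idx1 l.1) then
    match l with
    | (Sg i, false) => [:: (Mu (p i) (p i.+1), false)]
    | (Sg i, true) => [:: (Mu (p i.+1) (p i), true)]
    | (Tg i, false) => [:: (Ga (p i) (p i.+1), false)]
    | (Tg i, true) => [:: (Ga (p i.+1) (p i), true)]
    | (Vg _, _) => [::]
    end
  else [::].

Fixpoint rs (p : nat -> nat) (w : word gen1) : word gen2 :=
  if w is l :: w' then rs_letter p l ++ rs (track p l) w' else [::].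

Lemma rs_cat p u v : rs p (u ++ v) = rs p u ++ rs (track_word p u) v.
Proof. by elim: u p => //= l u IH p; rewrite IH catA. Qed.

Definition relabelling (p : nat -> nat) :=
  (forall k, valid_ix n k -> valid_ix n (p k)) /\ injective p.

Lemma relabelling_track p l : relabelling p -> relabelling (track p l).
Proof.
rewrite /track; case: ifP => // hl [hp p_inj]; split; last exact: inj_comp p_inj (@swap_inj _).
by move=> k hk /=; apply: hp; move: hl hk; rewrite /valid1 /valid_ix; case_swap; lia.
Qed.

Lemma relabelling_track_word p w : relabelling p -> relabelling (track_word p w).
Proof. by elim: w p => //= l w IH p /(relabelling_track l); exact: IH. Qed.

Ltac rel2_side hp p_inj := try apply: hp;
  rewrite /valid_ix /dist4 /dist3 ?(inj_eq p_inj); unfold valid1, far in *; simpl in *; lia.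

Lemma rs_cong w w' : cong (rel1 n) w w' ->
  forall p, relabelling p -> cong (rel2 n) (rs p w) (rs p w').
Proof.
elim=> {w w'}.
- move=> u v hr p [hp p_inj]; case: hr => [i hi|i hi|i j hi hj /adjP[]?|i j hi hj _
      |i j hi hj /adjP[]?|i j hi hj /adjP[]?|i j hi hj /adjP[]?|g h hi hj hf]; subst;
    rewrite /= /rs_letter /track /= ?hi ?hj /=; eval_swap; try exact: cong_refl.
  + by apply: cong_rel; apply: r2_mg; rel2_side hp p_inj.
  + by apply: cong_rel; apply: r2_mmm; rel2_side hp p_inj.
  + by apply/cong_sym/cong_rel; apply: r2_mmm; rel2_side hp p_inj.
  + by apply: cong_rel; apply: r2_mmg; rel2_side hp p_inj.
  + by apply/cong_sym/cong_rel; apply: r2_gmm; rel2_side hp p_inj.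
  move: hi hj hf; rewrite /far; case: g => i /= hi; case: h => j /= hj hf;
    rewrite /= /rs_letter /track /= ?hi ?hj /=; eval_swap; try exact: cong_refl.
  + by apply: cong_rel; apply: r2_mumu; rel2_side hp p_inj.
  + by apply: cong_rel; apply: r2_muga; rel2_side hp p_inj.
  + by apply/cong_sym/cong_rel; apply: r2_muga; rel2_side hp p_inj.
  + by apply: cong_rel; apply: r2_gaga; rel2_side hp p_inj.
- move=> g b p _; rewrite /= /rs_letter /track /=; case: (valid1 _ _) => /=; last exact: cong_refl.
  by case: g => i; case: b => /=; eval_swap; try exact: cong_refl; exact: cong_free.
- by move=> u p _; exact: cong_refl.
- by move=> u v _ IH p /IH /cong_sym.
- by move=> u v w _ IH1 _ IH2 p hp; exact: cong_trans (IH1 p hp) (IH2 p hp).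
- move=> u u' v v' hu IH1 _ IH2 p hp; rewrite !rs_cat (track_word_cong hu).
  by apply: cong_cat; [exact: IH1 | apply: IH2; exact: relabelling_track_word].
Qed.

Lemma track_inv p l : track (track p (l.1, ~~ l.2)) l = p.
Proof.
rewrite /track /=; case: (valid1 _ _) => //=.
by apply: functional_extensionality => x /=; rewrite swapK.
Qed.

Lemma rs_letter_inv p l : rs_letter p (l.1, ~~ l.2) = winv (rs_letter (track p (l.1, ~~ l.2)) l).
Proof.
case: l => g b; rewrite /rs_letter /track /=; case: (valid1 _ _) => //.
by case: g => i; case: b => /=; eval_swap.
Qed.

Lemma rs_winv p w : rs p (winv w) = winv (rs (track_word p (winv w)) w).
Proof.
elim: w p => // l w IH p.
rewrite winv_cons rs_cat track_word_cat IH /= cats0 winv_cat /track_word /= track_inv.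
by rewrite rs_letter_inv.
Qed.

Lemma track_word_winv p w : (forall q, track_word q w = q) -> track_word p (winv w) = p.
Proof.
move=> h; suff H q : track_word (track_word q (winv w)) w = q by rewrite -[LHS]h H.
elim: w {h} q => // l w IH q.
by rewrite winv_cons track_word_cat /track_word /= track_inv; exact: IH.
Qed.

Lemma rs_letter_V p i b : rs_letter p (Vg i, b) = [::].
Proof. by rewrite /rs_letter; case: ifP. Qed.

Lemma rs_vword p s : rs p (vword s) = [::].
Proof. by elim: s p => //= k s IH p; rewrite IH rs_letter_V. Qed.

Lemma track_vword p s : all (valid1 n) s -> track_word p (vword s) = p \o swaps s.
Proof.
elim: s p => [|k s IH] p; first by move=> _; apply: functional_extensionality.
by case/andP=> hk hs; rewrite [vword _]/= track_word_cons IH // /track /= hk.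
Qed.

End Rewriting.

Definition relabel (p : nat -> nat) (g : gen2) : gen2 :=
  match g with Mu a b => Mu (p a) (p b) | Ga a b => Ga (p a) (p b) end.

(* [fusX Sg a b] and [fusX Tg a b] are the fusing strings mu_ab and gamma_ab: a core
   conjugated by a string of v's, where [core_lt X i] is mu_{i,i+1} (resp. gamma) and
   [core_gt X i] is mu_{i+1,i}. *)
Definition fusion (c : nat -> seq gen1) (a b : nat) : seq gen1 := vdown a b ++ c a ++ vup a b.
Definition core_lt (X : nat -> gen1) (i : nat) : seq gen1 := [:: X i; Vg i].
Definition core_gt (X : nat -> gen1) (i : nat) : seq gen1 := [:: Vg i] ++ core_lt X i ++ [:: Vg i].

Definition fusX (X : nat -> gen1) (a b : nat) : seq gen1 :=
  if a < b then fusion (core_lt X) a b else fusion (core_gt X) b a.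

Lemma fusingE g : fusing g = match g with Mu a b => fusX Sg a b | Ga a b => fusX Tg a b end.
Proof. by case: g. Qed.

Section FusingRewrite.
Variable n : nat.
Variables (X : nat -> gen1) (Y : nat -> nat -> gen2).
Hypothesis rs_X : forall p i, valid1 n i ->
  rs_letter n p (X i, false) = [:: (Y (p i) (p i.+1), false)].
Hypothesis idx_X : forall i, idx1 (X i) = i.

Lemma rs_fusion c p a b : 0 < a < b -> b <= n ->
  let q := p \o swaps (rev (iota a.+1 (b - a.+1))) in
  rs n p (pw (fusion c a b)) = rs n q (pw (c a)) /\
  track_word n p (pw (fusion c a b)) = track_word n q (pw (c a)) \o swaps (iota a.+1 (b - a.+1)).
Proof.
move=> hab hb q; have hv : all (valid1 n) (iota a.+1 (b - a.+1)).
  by apply/allP => k; rewrite mem_iota /valid1; lia.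
rewrite /fusion /vdown /vup -map_rev !pw_cat !rs_cat !track_word_cat !rs_vword cats0.
by rewrite !track_vword ?all_rev.
Qed.

Lemma rs_fusion_lt p a b : 0 < a < b -> b <= n ->
  rs n p (pw (fusion (core_lt X) a b)) = [:: (Y (p a) (p b), false)] /\
  track_word n p (pw (fusion (core_lt X) a b)) = p.
Proof.
move=> hab hb; have [-> ->] := rs_fusion (core_lt X) p hab hb.
have ha : valid1 n a by rewrite /valid1; lia.
rewrite /= rs_X // /track_word /= /track /= idx_X ha /=; split.
  by rewrite rs_letter_V swaps_iota_lt // swaps_iota; have -> : a.+1 + (b - a.+1) = b by lia.
by apply: functional_extensionality => x /=; rewrite swapK swaps_revK.
Qed.

Lemma rs_fusion_gt p a b : 0 < a < b -> b <= n ->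
  rs n p (pw (fusion (core_gt X) a b)) = [:: (Y (p b) (p a), false)] /\
  track_word n p (pw (fusion (core_gt X) a b)) = p.
Proof.
move=> hab hb; have [-> ->] := rs_fusion (core_gt X) p hab hb.
have ha : valid1 n a by rewrite /valid1; lia.
rewrite /= !rs_letter_V rs_X // /track /= idx_X ha /=.
split.
  by eval_swap; rewrite swaps_iota swaps_iota_lt //; have -> : a.+1 + (b - a.+1) = b by lia.
by apply: functional_extensionality => x /=; rewrite !swapK swaps_revK.
Qed.

End FusingRewrite.

Section EvaluationRewrite.
Variable n : nat.

Lemma fusing_rs p g : valid2 n g ->
  rs n p (pw (fusing g)) = [:: (relabel p g, false)] /\ track_word n p (pw (fusing g)) = p.
Proof.
have rs_S q i : valid1 n i -> rs_letter n q (Sg i, false) = [:: (Mu (q i) (q i.+1), false)].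
  by rewrite /rs_letter /= => ->.
have rs_T q i : valid1 n i -> rs_letter n q (Tg i, false) = [:: (Ga (q i) (q i.+1), false)].
  by rewrite /rs_letter /= => ->.
case: g => a b /and5P [ha hna hb hnb hab]; rewrite fusingE /fusX /=; case: ltnP => h.
- by apply: (rs_fusion_lt rs_S) => //; rewrite ha.
- by apply: (rs_fusion_gt rs_S) => //; rewrite hb ltn_neqAle eq_sym hab.
- by apply: (rs_fusion_lt rs_T) => //; rewrite ha.
- by apply: (rs_fusion_gt rs_T) => //; rewrite hb ltn_neqAle eq_sym hab.
Qed.

Lemma rs_ev p u : wf2 n u ->
  rs n p (ev u) = map (fun l => (relabel p l.1, l.2)) u /\ track_word n p (ev u) = p.
Proof.
elim: u p => // -[g b] u IH p /= /andP [hg hu].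
have [rs_g track_g] := fusing_rs p hg.
rewrite -/(ev u) rs_cat track_word_cat /ev_letter /=; case: b => /=.
- rewrite rs_winv !track_word_winv ?rs_g; last by move=> q; case: (fusing_rs q hg).
  by have [-> ->] := IH p hu.
- by rewrite rs_g track_g; have [-> ->] := IH p hu.
Qed.

Lemma rs_evK u : wf2 n u -> rs n id (ev u) = u.
Proof.
move=> /(rs_ev id) [-> _].
by elim: u => //= -[g b] u ->; case: g.
Qed.

End EvaluationRewrite.

Definition idxs (w : word gen1) : seq nat := map (fun l => idx1 l.1) w.

Lemma piwE w : piw w = swaps (idxs w).
Proof. by apply: functional_extensionality => x; elim: w => //= l w ->. Qed.

Lemma piw_cat u v x : piw (u ++ v) x = piw u (piw v x).
Proof. by rewrite !piwE /idxs map_cat swaps_cat. Qed.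

Lemma piw_winv w x : piw (winv w) (piw w x) = x.
Proof. by rewrite !piwE /idxs /winv map_rev -map_comp swaps_revK. Qed.

Lemma piw_fusing g x : piw (pw (fusing g)) x = x.
Proof.
rewrite piwE /idxs fusingE; case: g => a b; rewrite /fusX; case: ifP => _;
  rewrite /fusion /vdown /vup /pw !map_cat -!map_comp !swaps_cat /= ?swapK;
  by rewrite map_rev -map_comp swaps_revK.
Qed.

Lemma ev_in_ker u : in_ker (ev u).
Proof.
elim: u => [|[g b] u IH] x //=.
rewrite piw_cat IH /ev_letter /=; case: b; last exact: piw_fusing.
by rewrite -{1}(piw_fusing g x) piw_winv.
Qed.

(** * Conjugating fusing strings by the v_k *)

Section PositiveWords.
Variable n : nat.

Definition pcong (u v : seq gen1) : Prop := cong (rel1 n) (pw u) (pw v).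

Lemma pcong_refl u : pcong u u. Proof. exact: cong_refl. Qed.
Lemma pcong_sym u v : pcong u v -> pcong v u. Proof. exact: cong_sym. Qed.
Lemma pcong_trans u v w : pcong u v -> pcong v w -> pcong u w. Proof. exact: cong_trans. Qed.

Lemma pcong_ctxE a b u v w1 w2 :
  w1 = a ++ u ++ b -> w2 = a ++ v ++ b -> pcong u v -> pcong w1 w2.
Proof. by move=> -> ->; rewrite /pcong !pw_cat; exact: cong_ctx. Qed.

Lemma pcong_vv i : valid1 n i -> pcong [:: Vg i; Vg i] [::].
Proof. by move=> hi; apply/cong_rel/r1_vv. Qed.

Lemma pcong_vvv i : valid1 n i -> valid1 n i.+1 ->
  pcong [:: Vg i; Vg i.+1; Vg i] [:: Vg i.+1; Vg i; Vg i.+1].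
Proof. by move=> hi hi'; apply/cong_rel/r1_vvv; rewrite // /adj eqxx. Qed.

Lemma pcong_far g h : valid1 n (idx1 g) -> valid1 n (idx1 h) -> far (idx1 g) (idx1 h) ->
  pcong [:: g; h] [:: h; g].
Proof. by move=> hg hh hf; apply/cong_rel/r1_far. Qed.

Lemma pcong_commute k w : valid1 n k ->
  all (fun h => valid1 n (idx1 h) && far k (idx1 h)) w -> pcong (Vg k :: w) (w ++ [:: Vg k]).
Proof.
move=> hk; elim: w => [|h w IH] /=; first by move=> _; exact: pcong_refl.
case/andP=> /andP [hh hf] hw; apply: (pcong_trans (v := [:: h] ++ Vg k :: w)).
  by apply: (pcong_ctxE (a := [::]) (b := w) _ _ (@pcong_far (Vg k) h hk hh hf)).
by apply: (pcong_ctxE (a := [:: h]) (b := [::]) _ _ (IH hw)); rewrite ?cats0.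
Qed.

Lemma pcong_vvr w k : valid1 n k -> pcong (w ++ [:: Vg k; Vg k]) w.
Proof.
by move=> hk; apply: (pcong_ctxE (a := w) (b := [::]) _ _ (pcong_vv hk)); rewrite ?cats0.
Qed.

Lemma pcong_vconjK w k : valid1 n k ->
  pcong ([:: Vg k] ++ ([:: Vg k] ++ w ++ [:: Vg k]) ++ [:: Vg k]) w.
Proof.
move=> hk; apply: (pcong_trans (v := [::] ++ w ++ [:: Vg k; Vg k])); last exact: pcong_vvr.
by apply: (pcong_ctxE (a := [::]) (b := w ++ [:: Vg k; Vg k]) _ _ (pcong_vv hk)); rewrite //= -catA.
Qed.

End PositiveWords.

Ltac pcong_via w := apply: (pcong_trans (v := w)).
Ltac pcong_in A U V B := apply: (pcong_ctxE (a := A) (u := U) (v := V) (b := B));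
  [by rewrite /= -?catA /= ?cats0 -?catA | by rewrite /= -?catA /= ?cats0 -?catA | ].

Lemma fusion_base c a : fusion c a a.+1 = c a.
Proof. by rewrite /fusion /vdown /vup subnn cats0. Qed.

Lemma fusion_rec c a b : a < b -> fusion c a b.+1 = [:: Vg b] ++ fusion c a b ++ [:: Vg b].
Proof.
move=> hab; rewrite /fusion /vdown /vup.
have -> : b.+1 - a.+1 = (b - a.+1) + 1 by lia.
rewrite iotaD map_cat rev_cat /=; have -> : a.+1 + (b - a.+1) = b by lia.
by rewrite -!catA.
Qed.

Section FusionConjugation.
Variables (n : nat) (c : nat -> seq gen1).
Hypothesis idx_c : forall i, all (fun h => idx1 h == i) (c i).
Hypothesis shift_c : forall i, valid1 n i -> valid1 n i.+1 ->
  pcong n ([:: Vg i; Vg i.+1] ++ c i ++ [:: Vg i.+1; Vg i]) (c i.+1).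

Lemma fusion_idx a b : a < b -> all (fun h => a <= idx1 h < b) (fusion c a b).
Proof.
elim: b => // b IH; rewrite ltnS leq_eqVlt => /orP [/eqP <-|hab].
  by rewrite fusion_base; apply: sub_all (idx_c a) => h /eqP ->; lia.
have HF : all (fun h => a <= idx1 h < b.+1) (fusion c a b).
  by apply: sub_all (IH hab) => h; lia.
by rewrite fusion_rec // all_cat all_cat HF /=; lia.
Qed.

Lemma fusion_commute k a b : 0 < a < b -> b <= n -> valid1 n k -> (k.+1 < a) || (b < k) ->
  pcong n (Vg k :: fusion c a b) (fusion c a b ++ [:: Vg k]).
Proof.
move=> hab hb hk hkab; apply: pcong_commute => //.
by apply: sub_all (fusion_idx (proj2 (andP hab))) => h; rewrite /valid1 /far; lia.
Qed.

Lemma core_conj a k : 0 < a < n -> valid1 n k -> k != a ->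
  pcong n ([:: Vg k] ++ c a ++ [:: Vg k]) (fusion c (swap k a) (swap k a.+1)).
Proof.
move=> ha hk hka; have [->|hka1] := eqVneq k a.+1.
  by eval_swap; rewrite fusion_rec // fusion_base; exact: pcong_refl.
have [hka'|hka'] := eqVneq k.+1 a.
  subst a; have hk1 : valid1 n k.+1 by rewrite /valid1; lia.
  eval_swap; rewrite fusion_rec // fusion_base.
  apply: pcong_trans (pcong_vconjK ([:: Vg k.+1] ++ c k ++ [:: Vg k.+1]) hk).
  pcong_in [:: Vg k] (c k.+1) ([:: Vg k] ++ ([:: Vg k.+1] ++ c k ++ [:: Vg k.+1]) ++ [:: Vg k])
    [:: Vg k].
  by apply: pcong_sym; have := shift_c hk hk1; rewrite /= -!catA.
eval_swap; rewrite fusion_base; apply: pcong_trans (pcong_vvr (c a) hk).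
pcong_in ([::] : seq gen1) (Vg k :: c a) (c a ++ [:: Vg k]) [:: Vg k].
by rewrite -fusion_base; apply: fusion_commute => //; lia.
Qed.

Lemma fusion_conj_braid a k : 0 < a < k -> k.+1 < n ->
  pcong n ([:: Vg k] ++ fusion c a k.+2 ++ [:: Vg k]) (fusion c a k.+2).
Proof.
move=> hak hkn; have hk : valid1 n k by rewrite /valid1; lia.
have hk1 : valid1 n k.+1 by rewrite /valid1; lia.
rewrite !fusion_rec; try lia; set F := fusion c a k.
pcong_via ([:: Vg k.+1; Vg k; Vg k.+1] ++ F ++ [:: Vg k; Vg k.+1; Vg k]).
  by pcong_in ([::] : seq gen1) [:: Vg k; Vg k.+1; Vg k] [:: Vg k.+1; Vg k; Vg k.+1]
    (F ++ [:: Vg k; Vg k.+1; Vg k]); exact: pcong_vvv.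
pcong_via ([:: Vg k.+1; Vg k; Vg k.+1] ++ F ++ [:: Vg k.+1; Vg k; Vg k.+1]).
  by pcong_in ([:: Vg k.+1; Vg k; Vg k.+1] ++ F) [:: Vg k; Vg k.+1; Vg k]
    [:: Vg k.+1; Vg k; Vg k.+1] ([::] : seq gen1); exact: pcong_vvv.
pcong_via ([:: Vg k.+1; Vg k] ++ F ++ [:: Vg k.+1; Vg k.+1; Vg k; Vg k.+1]).
  by pcong_in [:: Vg k.+1; Vg k] (Vg k.+1 :: F) (F ++ [:: Vg k.+1]) [:: Vg k.+1; Vg k; Vg k.+1];
    apply: fusion_commute => //; lia.
by pcong_in ([:: Vg k.+1; Vg k] ++ F) [:: Vg k.+1; Vg k.+1] ([::] : seq gen1) [:: Vg k; Vg k.+1];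
  exact: pcong_vv.
Qed.

(* The excluded case [k = a], [b = a.+1] is the one where conjugation swaps the
   order of the two strands. *)
Lemma fusion_conj b : forall a k, 0 < a < b -> b <= n -> valid1 n k ->
  ~~ ((k == a) && (b == a.+1)) ->
  pcong n ([:: Vg k] ++ fusion c a b ++ [:: Vg k]) (fusion c (swap k a) (swap k b)).
Proof.
elim: b => [|b IH] a k hab hb hk hflip; first lia.
case: (ltngtP a b) => [hlt|hgt|?]; [|lia|]; last first.
  subst b; rewrite fusion_base; apply: core_conj => //; first lia.
  by move: hflip; rewrite eqxx andbT.
have hvb : valid1 n b by rewrite /valid1; lia.
have [->|hkb] := eqVneq k b.
  by eval_swap; rewrite fusion_rec //; exact: pcong_vconjK.
have [->|hkb1] := eqVneq k b.+1.
  by eval_swap; rewrite (@fusion_rec c a b.+1); [exact: pcong_refl | lia].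
have [hkb'|hkb'] := eqVneq k.+1 b.
  subst b; have [?|hak] := eqVneq a k.
    subst a; have hk1 : valid1 n k.+1 by [].
    by eval_swap; rewrite fusion_rec // !fusion_base; have := shift_c hk hk1; rewrite /= -!catA.
  by eval_swap; apply: fusion_conj_braid; lia.
have hfar : far k b by rewrite /far; lia.
have hsb : swap k b = b by eval_swap.
have -> : swap k b.+1 = b.+1 by eval_swap.
have hka : swap k a < b by move: hfar; rewrite /far /swap; case_swap; lia.
rewrite !fusion_rec //.
set F := fusion c a b.
pcong_via ([:: Vg b] ++ ([:: Vg k] ++ F ++ [:: Vg k]) ++ [:: Vg b]).
  pcong_via ([:: Vg b; Vg k] ++ F ++ [:: Vg b; Vg k]).
    by pcong_in ([::] : seq gen1) [:: Vg k; Vg b] [:: Vg b; Vg k] (F ++ [:: Vg b; Vg k]);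
      exact: (@pcong_far n (Vg k) (Vg b) hk hvb hfar).
  by pcong_in ([:: Vg b; Vg k] ++ F) [:: Vg b; Vg k] [:: Vg k; Vg b] ([::] : seq gen1);
    apply: (@pcong_far n (Vg b) (Vg k)) => //=; move: hfar; rewrite /far; lia.
pcong_in [:: Vg b] ([:: Vg k] ++ F ++ [:: Vg k]) (fusion c (swap k a) b) [:: Vg b].
by rewrite -{1}hsb; apply: IH => //; lia.
Qed.

End FusionConjugation.

Section Cores.
Variables (n : nat) (X : nat -> gen1).
Hypothesis XP : X = Sg \/ X = Tg.

Lemma idx_X i : idx1 (X i) = i.
Proof. by case: XP => ->. Qed.

Lemma pcong_vXv i : valid1 n i -> valid1 n i.+1 ->
  pcong n [:: Vg i; X i.+1; Vg i] [:: Vg i.+1; X i; Vg i.+1].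
Proof.
by move=> hi hi'; apply: cong_rel; case: XP => ->; [apply: r1_vsv | apply: r1_vtv];
  rewrite // /adj eqxx.
Qed.

Lemma idx_core_lt i : all (fun h => idx1 h == i) (core_lt X i).
Proof. by rewrite /= idx_X eqxx. Qed.

Lemma shift_core_lt i : valid1 n i -> valid1 n i.+1 ->
  pcong n ([:: Vg i; Vg i.+1] ++ core_lt X i ++ [:: Vg i.+1; Vg i]) (core_lt X i.+1).
Proof.
move=> hi hi'; apply: pcong_sym.
pcong_via [:: Vg i; Vg i; X i.+1; Vg i; Vg i; Vg i.+1].
  pcong_via [:: Vg i; Vg i; X i.+1; Vg i.+1].
    by pcong_in ([::] : seq gen1) ([::] : seq gen1) [:: Vg i; Vg i] (core_lt X i.+1);
      exact/pcong_sym/pcong_vv.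
  by pcong_in [:: Vg i; Vg i; X i.+1] ([::] : seq gen1) [:: Vg i; Vg i] [:: Vg i.+1];
    exact/pcong_sym/pcong_vv.
pcong_via [:: Vg i; Vg i.+1; X i; Vg i.+1; Vg i; Vg i.+1].
  by pcong_in [:: Vg i] [:: Vg i; X i.+1; Vg i] [:: Vg i.+1; X i; Vg i.+1] [:: Vg i; Vg i.+1];
    exact: pcong_vXv.
by pcong_in [:: Vg i; Vg i.+1; X i] [:: Vg i.+1; Vg i; Vg i.+1] [:: Vg i; Vg i.+1; Vg i]
  ([::] : seq gen1); exact/pcong_sym/pcong_vvv.
Qed.

Lemma idx_core_gt i : all (fun h => idx1 h == i) (core_gt X i).
Proof. by rewrite /= idx_X eqxx. Qed.

Lemma shift_core_gt i : valid1 n i -> valid1 n i.+1 ->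
  pcong n ([:: Vg i; Vg i.+1] ++ core_gt X i ++ [:: Vg i.+1; Vg i]) (core_gt X i.+1).
Proof.
move=> hi hi'; set C := core_lt X i.
pcong_via ([:: Vg i.+1; Vg i; Vg i.+1] ++ C ++ [:: Vg i; Vg i.+1; Vg i]).
  by pcong_in ([::] : seq gen1) [:: Vg i; Vg i.+1; Vg i] [:: Vg i.+1; Vg i; Vg i.+1]
    (C ++ [:: Vg i; Vg i.+1; Vg i]); exact: pcong_vvv.
pcong_via ([:: Vg i.+1; Vg i; Vg i.+1] ++ C ++ [:: Vg i.+1; Vg i; Vg i.+1]).
  by pcong_in ([:: Vg i.+1; Vg i; Vg i.+1] ++ C) [:: Vg i; Vg i.+1; Vg i]
    [:: Vg i.+1; Vg i; Vg i.+1] ([::] : seq gen1); exact: pcong_vvv.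
by pcong_in [:: Vg i.+1] ([:: Vg i; Vg i.+1] ++ C ++ [:: Vg i.+1; Vg i]) (core_lt X i.+1)
  [:: Vg i.+1]; exact: shift_core_lt.
Qed.

Lemma fusX_conj a b k : 0 < a <= n -> 0 < b <= n -> a != b -> valid1 n k ->
  pcong n ([:: Vg k] ++ fusX X a b ++ [:: Vg k]) (fusX X (swap k a) (swap k b)).
Proof.
move=> ha hb hab hk; rewrite {1}/fusX; case: ltngtP => h; last by rewrite h eqxx in hab.
- have [/andP [/eqP ka /eqP ba]|hflip] := boolP ((k == a) && (b == a.+1)).
    subst; eval_swap; rewrite /fusX ltnNge leqnSn /= !fusion_base; exact: pcong_refl.
  rewrite /fusX swap_lt //; apply: fusion_conj => //; last by case/andP: hb.
  + exact: idx_core_lt.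
  + exact: shift_core_lt.
  + by case/andP: ha => ->.
- have [/andP [/eqP kb /eqP ab]|hflip] := boolP ((k == b) && (a == b.+1)).
    by subst; eval_swap; rewrite /fusX ltnSn !fusion_base; exact: pcong_vconjK.
  rewrite /fusX ltnNge ltnW ?swap_lt //=; apply: fusion_conj => //; last by case/andP: ha.
  + exact: idx_core_gt.
  + exact: shift_core_gt.
  + by case/andP: hb => ->.
Qed.

End Cores.

(** * Reidemeister--Schreier decomposition *)

Lemma vword_rcons s i : vword (rcons s i) = vword s ++ [:: (Vg i, false)].
Proof. by rewrite /vword map_rcons /pw map_rcons cats1. Qed.

Lemma ev_cat u v : ev (u ++ v) = ev u ++ ev v.
Proof. by rewrite /ev map_cat flatten_cat. Qed.

Lemma ev1 g b : ev [:: (g, b)] = ev_letter (g, b).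
Proof. by rewrite /ev /= cats0. Qed.

Ltac cong_via w := apply: (cong_trans (v := w)).
Ltac cong_in A U V B := apply: (cong_ctxE (a := A) (u := U) (v := V) (b := B));
  [by rewrite /= -?catA /= -?catA | by rewrite /= -?catA /= -?catA | ].

Section Decomposition.
Variable n : nat.
Local Notation C := (cong (rel1 n)).

Lemma cong_vV k : valid1 n k -> C [:: (Vg k, true)] [:: (Vg k, false)].
Proof.
move=> hk; cong_via ([:: (Vg k, true)] ++ [:: (Vg k, false); (Vg k, false)]).
  by cong_in [:: (Vg k, true)] ([::] : word gen1) [:: (Vg k, false); (Vg k, false)]
    ([::] : word gen1); exact/cong_sym/cong_rel/r1_vv.
by cong_in ([::] : word gen1) [:: (Vg k, true); (Vg k, false)] ([::] : word gen1)
  [:: (Vg k, false)]; exact: (cong_free _ (Vg k) true).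
Qed.

Lemma relabelling_swaps s : all (valid1 n) s -> relabelling n (swaps s).
Proof.
elim: s => [|k s IH] /=; first by split => // x y.
case/andP=> hk /IH [hs s_inj]; split; last by move=> x y /= /swap_inj /s_inj.
by move=> x hx /=; have := hs x hx; move: hk; rewrite /valid1 /valid_ix; case_swap; lia.
Qed.

Lemma valid2_relabel p g : relabelling n p -> valid2 n g -> valid2 n (relabel p g).
Proof.
case=> hp p_inj; case: g => a b /and5P [ha1 ha2 hb1 hb2 hab] /=;
  have /andP [-> ->] : valid_ix n (p a) by apply: hp; rewrite /valid_ix ha1.
all: have /andP [-> ->] : valid_ix n (p b) by apply: hp; rewrite /valid_ix hb1.
all: by rewrite (inj_eq p_inj).
Qed.

Lemma vword_conj_fusing s g : all (valid1 n) s -> valid2 n g ->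
  C (vword s ++ pw (fusing g) ++ winv (vword s)) (pw (fusing (relabel (swaps s) g))).
Proof.
elim: s g => [|k s IH] g; first by move=> _ _ /=; rewrite cats0; case: g => *; exact: cong_refl.
move=> /= /andP [hk hs] hg; have hg' := valid2_relabel (relabelling_swaps hs) hg.
rewrite /vword /= winv_cons /= -/(vword s).
set F := pw (fusing (relabel (swaps s) g)).
cong_via ([:: (Vg k, false)] ++ F ++ [:: (Vg k, true)]).
  by cong_in [:: (Vg k, false)] (vword s ++ pw (fusing g) ++ winv (vword s)) F
    [:: (Vg k, true)]; exact: IH.
cong_via ([:: (Vg k, false)] ++ F ++ [:: (Vg k, false)]).
  by cong_in ([:: (Vg k, false)] ++ F) [:: (Vg k, true)] [:: (Vg k, false)]
    ([::] : word gen1); exact: cong_vV.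
have -> : relabel (swaps (k :: s)) g = relabel (swap k) (relabel (swaps s) g) by case: (g).
rewrite /F; move: hg'; case: (relabel (swaps s) g) => a b /and5P [ha1 ha2 hb1 hb2 hab] /=;
  have ha : 0 < a <= n by rewrite ha1.
all: have hb : 0 < b <= n by rewrite hb1.
- by have := fusX_conj (X := Sg) (or_introl erefl) ha hb hab hk; rewrite /pcong !pw_cat.
- by have := fusX_conj (X := Tg) (or_intror erefl) ha hb hab hk; rewrite /pcong !pw_cat.
Qed.

Section LetterDecomposition.
Variables (X : nat -> gen1) (G : nat -> nat -> gen2).
Hypothesis fusing_G : forall a b, fusing (G a b) = fusX X a b.
Hypothesis relabel_G : forall p a b, relabel p (G a b) = G (p a) (p b).
Hypothesis valid2_G : forall a b, valid2 n (G a b) = [&& 0 < a, a <= n, 0 < b, b <= n & a != b].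

Lemma fusing_G_elem i : pw (fusing (G i i.+1)) = [:: (X i, false); (Vg i, false)].
Proof. by rewrite fusing_G /fusX ltnSn fusion_base. Qed.

Lemma valid2_G_elem i : valid1 n i -> valid2 n (G i i.+1).
Proof. by rewrite valid2_G /valid1; lia. Qed.

(* [X i = (X i v_i) v_i], and [s (X i v_i) s^-1] is the fusing string of the strands
   [swaps s i], [swaps s i.+1]. *)
Lemma letter_decomposition s i : all (valid1 n) s -> valid1 n i ->
  C (vword s ++ [:: (X i, false)])
    (ev [:: (G (swaps s i) (swaps s i.+1), false)] ++ vword s ++ [:: (Vg i, false)]).
Proof.
move=> hs hi; have := vword_conj_fusing hs (valid2_G_elem hi).
rewrite fusing_G_elem relabel_G ev1 /ev_letter /= => hC.
cong_via (vword s ++ [:: (X i, false); (Vg i, false)] ++ [:: (Vg i, false)]).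
  by cong_in (vword s ++ [:: (X i, false)]) ([::] : word gen1)
    [:: (Vg i, false); (Vg i, false)] ([::] : word gen1); exact/cong_sym/cong_rel/r1_vv.
cong_via ((vword s ++ [:: (X i, false); (Vg i, false)] ++ winv (vword s)) ++
  vword s ++ [:: (Vg i, false)]).
  by cong_in (vword s ++ [:: (X i, false); (Vg i, false)]) ([::] : word gen1)
    (winv (vword s) ++ vword s) [:: (Vg i, false)]; exact/cong_sym/cong_Vmul.
by cong_in ([::] : word gen1) (vword s ++ [:: (X i, false); (Vg i, false)] ++ winv (vword s))
  (pw (fusing (G (swaps s i) (swaps s i.+1)))) (vword s ++ [:: (Vg i, false)]).
Qed.

(* With [S = s v_i]: [s X_i^-1 = S (X_i v_i)^-1 S^-1 S], and [S (X_i v_i) S^-1] is the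
   fusing string of the strands [swaps s i.+1], [swaps s i]. *)
Lemma letter_decompositionV s i : all (valid1 n) s -> valid1 n i ->
  C (vword s ++ [:: (X i, true)])
    (ev [:: (G (swaps s i.+1) (swaps s i), true)] ++ vword s ++ [:: (Vg i, false)]).
Proof.
move=> hs hi; have hs' : all (valid1 n) (rcons s i) by rewrite all_rcons hi hs.
have := vword_conj_fusing hs' (valid2_G_elem hi).
rewrite fusing_G_elem relabel_G ev1 /ev_letter /= !swaps_rcons vword_rcons; eval_swap => hC.
set S := vword s ++ [:: (Vg i, false)] in hC *.
cong_via (vword s ++ [:: (Vg i, false); (Vg i, true)] ++ [:: (X i, true)]).
  by cong_in (vword s) ([::] : word gen1) [:: (Vg i, false); (Vg i, true)] [:: (X i, true)];
    exact/cong_sym/(cong_free _ (Vg i) false).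
cong_via ((S ++ [:: (Vg i, true); (X i, true)] ++ winv S) ++ S).
  by cong_in (S ++ [:: (Vg i, true); (X i, true)]) ([::] : word gen1) (winv S ++ S)
    ([::] : word gen1); exact/cong_sym/cong_Vmul.
cong_in ([::] : word gen1) (S ++ [:: (Vg i, true); (X i, true)] ++ winv S)
  (winv (pw (fusing (G (swaps s i.+1) (swaps s i))))) S.
have -> : S ++ [:: (Vg i, true); (X i, true)] ++ winv S =
          winv (S ++ [:: (X i, false); (Vg i, false)] ++ winv S).
  by rewrite !winv_cat winvK -catA.
exact: cong_winv.
Qed.

End LetterDecomposition.

Lemma rs_letter_decomposition s l : all (valid1 n) s -> valid1 n (idx1 l.1) ->
  C (vword s ++ [:: l]) (ev (rs_letter n (swaps s) l) ++ vword s ++ [:: (Vg (idx1 l.1), false)]).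
Proof.
move=> hs; case: l => g b /= hv; rewrite /rs_letter /= hv.
case: g hv => i hv /=; case: b.
- exact: (@letter_decompositionV Sg Mu).
- exact: (@letter_decomposition Sg Mu).
- by cong_in (vword s) [:: (Vg i, true)] [:: (Vg i, false)] ([::] : word gen1); exact: cong_vV.
- exact: cong_refl.
- exact: (@letter_decompositionV Tg Ga).
- exact: (@letter_decomposition Tg Ga).
Qed.

Lemma rs_decomposition w s : wf1 n w -> all (valid1 n) s ->
  C (vword s ++ w) (ev (rs n (swaps s) w) ++ vword s ++ vword (idxs w)).
Proof.
elim: w s => [|l w IH] s /=; first by rewrite /vword !cats0 => _ _; exact: cong_refl.
case/andP=> hl hw hs.
have track_l : track n (swaps s) l = swaps (rcons s (idx1 l.1)).
  by rewrite /track hl; apply: functional_extensionality => x /=; rewrite swaps_rcons.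
have hs' : all (valid1 n) (rcons s (idx1 l.1)) by rewrite all_rcons hl hs.
rewrite track_l ev_cat.
cong_via ((ev (rs_letter n (swaps s) l) ++ vword s ++ [:: (Vg (idx1 l.1), false)]) ++ w).
  by cong_in ([::] : word gen1) (vword s ++ [:: l])
    (ev (rs_letter n (swaps s) l) ++ vword s ++ [:: (Vg (idx1 l.1), false)]) w;
    exact: rs_letter_decomposition.
apply: (cong_ctxE (a := ev (rs_letter n (swaps s) l)) (b := [::]) _ _ (IH _ hw hs')).
  by rewrite vword_rcons cats0 -!catA.
by rewrite vword_rcons /vword /= cats0 -!catA.
Qed.

End Decomposition.

(** * The v_i satisfy the Coxeter presentation of the symmetric group *)

Definition down_run (M r : nat) : seq nat := rev (iota r (M.+1 - r)).

Lemma down_run_rcons M r : r <= M -> down_run M r = rcons (down_run M r.+1) r.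
Proof.
move=> h; rewrite /down_run; have -> : M.+1 - r = (M.+1 - r.+1).+1 by lia.
by rewrite /= rev_cons.
Qed.

Lemma mem_down_run M r x : (x \in down_run M r) = (r <= x <= M).
Proof. by rewrite mem_rev mem_iota; apply/idP/idP; lia. Qed.

Section Coxeter.
Variable n : nat.

Lemma pcong_commute_vword k s : valid1 n k -> all (fun x => valid1 n x && far k x) s ->
  pcong n (Vg k :: map Vg s) (map Vg s ++ [:: Vg k]).
Proof. by move=> hk hs; apply: pcong_commute; rewrite // all_map. Qed.

Lemma pcong_vword_swaps s s' : all (valid1 n) s -> all (valid1 n) s' ->
  pcong n (map Vg s) (map Vg s') -> swaps s =1 swaps s'.
Proof.
move=> hs hs' /track_word_cong /(_ id); rewrite !track_vword // => e x.
exact: (congr1 (fun f => f x) e).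
Qed.

Lemma down_run_commute M r k : 0 < k -> k.+1 < r <= M.+1 -> M < n ->
  pcong n (map Vg (down_run M r) ++ [:: Vg k]) (Vg k :: map Vg (down_run M r)).
Proof.
move=> hk hkr hM; apply/pcong_sym/pcong_commute_vword; first by rewrite /valid1; lia.
by apply/allP => x; rewrite mem_down_run /valid1 /far; lia.
Qed.

Lemma down_run_braid M r k : 0 < r < k -> k <= M -> M < n ->
  pcong n (map Vg (down_run M r) ++ [:: Vg k]) (Vg k.-1 :: map Vg (down_run M r)).
Proof.
move=> hrk hkM hM; have hvk : valid1 n k by rewrite /valid1; lia.
have hvk1 : valid1 n k.-1 by rewrite /valid1; lia.
set A := down_run M k.+1; set B := rev (iota r (k.-1 - r)).
have -> : down_run M r = A ++ [:: k; k.-1] ++ B.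
  rewrite /A /B /down_run; have -> : M.+1 - r = (k.-1 - r) + 2 + (M.+1 - k.+1) by lia.
  rewrite !iotaD !rev_cat /=; have -> : r + (k.-1 - r) = k.-1 by lia.
  have -> : r + (k.-1 - r + 2) = k.+1 by lia.
  by have -> : k.-1.+1 = k by lia.
rewrite !map_cat -!catA /=.
pcong_via (map Vg A ++ [:: Vg k; Vg k.-1; Vg k] ++ map Vg B).
  pcong_in (map Vg A ++ [:: Vg k; Vg k.-1]) (map Vg B ++ [:: Vg k]) (Vg k :: map Vg B)
    ([::] : seq gen1).
  apply/pcong_sym/pcong_commute_vword => //.
  by apply/allP => x; rewrite mem_rev mem_iota /valid1 /far; lia.
pcong_via (map Vg A ++ [:: Vg k.-1; Vg k; Vg k.-1] ++ map Vg B).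
  pcong_in (map Vg A) [:: Vg k; Vg k.-1; Vg k] [:: Vg k.-1; Vg k; Vg k.-1] (map Vg B).
  have := pcong_vvv hvk1; rewrite (_ : k.-1.+1 = k); last lia.
  by move=> /(_ hvk) /pcong_sym.
pcong_in ([::] : seq gen1) (map Vg A ++ [:: Vg k.-1]) (Vg k.-1 :: map Vg A)
  ([:: Vg k; Vg k.-1] ++ map Vg B).
apply/pcong_sym/pcong_commute_vword => //.
by apply/allP => x; rewrite mem_down_run /valid1 /far; lia.
Qed.

Lemma normal_form_rcons M u r k : 0 < M < n -> all (fun x => 0 < x < M) u -> 0 < r <= M.+1 ->
  0 < k <= M -> exists u' r', [/\ all (fun x => 0 < x < M) u', 0 < r' <= M.+1 &
    pcong n (map Vg (u ++ down_run M r) ++ [:: Vg k]) (map Vg (u' ++ down_run M r'))].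
Proof.
move=> hM hu hr hk; case: (ltngtP k r) => hkr.
- have [hk1|hk1] := eqVneq k.+1 r.
    exists u, k; split => //; first lia.
    rewrite -hk1 (@down_run_rcons M k); last lia.
    by rewrite !map_cat map_rcons -cats1 -catA; exact: pcong_refl.
  exists (rcons u k), r; split => //; first by rewrite all_rcons hu /=; lia.
  rewrite !map_cat map_rcons -cats1 -!catA.
  by pcong_in (map Vg u) (map Vg (down_run M r) ++ [:: Vg k]) (Vg k :: map Vg (down_run M r))
    ([::] : seq gen1); apply: down_run_commute; lia.
- exists (rcons u k.-1), r; split => //; first by rewrite all_rcons hu /=; lia.
  rewrite !map_cat map_rcons -cats1 -!catA.
  by pcong_in (map Vg u) (map Vg (down_run M r) ++ [:: Vg k]) (Vg k.-1 :: map Vg (down_run M r))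
    ([::] : seq gen1); apply: down_run_braid; lia.
- subst r; exists u, k.+1; split => //; first lia.
  rewrite (@down_run_rcons M k); last lia.
  rewrite !map_cat map_rcons -cats1 -!catA.
  pcong_in (map Vg u ++ map Vg (down_run M k.+1)) [:: Vg k; Vg k] ([::] : seq gen1)
    ([::] : seq gen1).
  by apply: pcong_vv; rewrite /valid1; lia.
Qed.

Lemma vword_normal_form M s : 0 < M < n -> all (fun k => 0 < k <= M) s ->
  exists u r, [/\ all (fun k => 0 < k < M) u, 0 < r <= M.+1 &
                  pcong n (map Vg s) (map Vg (u ++ down_run M r))].
Proof.
move=> hM; elim/last_ind: s => [|s k IH].
  move=> _; exists [::], M.+1; rewrite /down_run subnn.
  by split; rewrite ?ltnSn //; exact: pcong_refl.
rewrite all_rcons => /andP [hk /IH [u [r [hu hr he]]]].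
have [u' [r' [hu' hr' he']]] := normal_form_rcons hM hu hr hk.
exists u', r'; split => //; apply: pcong_trans he'.
by rewrite map_rcons -cats1; pcong_in ([::] : seq gen1) (map Vg s) (map Vg (u ++ down_run M r))
  [:: Vg k].
Qed.

Lemma vword_trivial M s : M < n -> all (fun k => 0 < k <= M) s -> swaps s =1 id ->
  pcong n (map Vg s) [::].
Proof.
elim: M s => [|M IH] s hM hs hid.
  by case: s hs {hid} => [|k s] /=; [move=> _; exact: pcong_refl | case/andP; lia].
have [u [r [hu hr he]]] := @vword_normal_form M.+1 s hM hs.
have hvs : all (valid1 n) s by apply: sub_all hs => x; rewrite /valid1; lia.
have hvu : all (valid1 n) (u ++ down_run M.+1 r).
  rewrite all_cat; apply/andP; split; first by apply: sub_all hu => x; rewrite /valid1; lia.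
  by apply/allP => x; rewrite mem_down_run /valid1; lia.
have hfs := pcong_vword_swaps hvs hvu he.
have hrM : r = M.+2.
  apply/eqP; rewrite eqn_leq; case/andP: hr => _ ->; rewrite leqNgt; apply/negP => hlt.
  have := hfs r; rewrite hid swaps_cat /down_run swaps_iota swaps_id; first lia.
  by apply: sub_all hu => x; lia.
subst r; move: he hfs; rewrite /down_run subnn /= cats0 => he hfs.
apply: (pcong_trans he); apply: IH; [lia | by apply: sub_all hu => x; lia | ].
by move=> x; rewrite -hfs hid.
Qed.

End Coxeter.

(** * The relations of [VSPG_n] hold in [VSG_n] *)

Section Transfer.
Variable n : nat.
Local Notation C := (cong (rel1 n)).

Lemma swaps_range s L x : all (fun k => L <= k < n) s -> L <= x <= n -> L <= swaps s x <= n.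
Proof.
elim: s => //= k s IH /andP [hk hs] hx; have := IH hs hx.
by move: hk; rewrite /swap; case_swap; lia.
Qed.

Lemma swaps_realise m : forall xs L, size xs = m -> 0 < L -> uniq xs ->
  all (fun x => L <= x <= n) xs ->
  exists s, all (fun k => L <= k < n) s /\ forall i, i < size xs -> swaps s (L + i) = nth 0 xs i.
Proof.
elim: m => [|m IH] [|c ys] L //= hsz hL; first by exists [::].
case/andP=> hc hu /andP [hcL hall].
set s1 := rev (iota L (c - L)).
have hs1 : all (fun k => L <= k < n) s1 by apply/allP => x; rewrite mem_rev mem_iota; lia.
have e1 : swaps s1 L = c by rewrite /s1 swaps_iota; lia.
have inj : injective (swaps (rev s1)) by move=> x y /(congr1 (swaps s1)); rewrite !swaps_Krev.
set ys' := map (swaps (rev s1)) ys.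
have hall' : all (fun x => L.+1 <= x <= n) ys'.
  apply/allP => _ /mapP [x hx ->]; move/allP: hall => /(_ x hx) hx'.
  have := swaps_range (x := x) (s := rev s1) (L := L); rewrite all_rev => /(_ hs1 hx').
  suff : swaps (rev s1) x != L by lia.
  by apply: contra hc => /eqP e; rewrite -e1 -e swaps_Krev.
have hsz' : size ys' = m by rewrite size_map; case: hsz.
have hu' : uniq ys' by rewrite map_inj_uniq.
have [s2 [hs2 hs2e]] := IH ys' L.+1 hsz' isT hu' hall'.
exists (s1 ++ s2); split; first by rewrite all_cat hs1 /=; apply: sub_all hs2 => x /=; lia.
case=> [|i] hi.
  by rewrite addn0 swaps_cat (@swaps_id s2 L) ?e1 //; apply: sub_all hs2 => x /=; lia.
rewrite swaps_cat addnS -addSn hs2e ?size_map //.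
by rewrite /ys' (nth_map 0) ?swaps_Krev.
Qed.

Lemma rel1_wf L R : rel1 n L R -> wf1 n L /\ wf1 n R.
Proof. by case=> *; rewrite /wf1 /=; split; unfold valid1 in *; simpl in *; lia. Qed.

Lemma rel1_vword_idxs L R : rel1 n L R -> C (vword (idxs L)) (vword (idxs R)).
Proof.
case=> {L R} [i|i|i j|i j|i j|i j|i j|g h] *; first [exact: cong_refl | apply: cong_rel].
- exact: r1_vv.
all: try exact: r1_vvv.
exact: (@r1_far n (Vg (idx1 g)) (Vg (idx1 h))).
Qed.

(* Both sides of a relation of VSG_n, read after the same v-word, decompose with the
   same trailing permutation word; cancelling it transfers the relation to the
   rewritten words. *)
Lemma rel1_transfer s L R : all (valid1 n) s -> rel1 n L R ->
  C (ev (rs n (swaps s) L)) (ev (rs n (swaps s) R)).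
Proof.
move=> hs hr; have [hL hR] := rel1_wf hr.
apply: (cong_trans (cong_mulVr (rs_decomposition hL hs))).
apply/cong_sym/(cong_trans (cong_mulVr (rs_decomposition hR hs)))/cong_sym.
apply: cong_cat; first by apply: cong_cat; [exact: cong_refl | exact: cong_rel].
by apply/cong_winv/cong_cat; [exact: cong_refl | exact: rel1_vword_idxs].
Qed.

End Transfer.

Section Relations.
Variable n : nat.
Local Notation C := (cong (rel1 n)).

Lemma rs_wf p w : relabelling n p -> wf2 n (rs n p w).
Proof.
elim: w p => //= l w IH p hp; rewrite /wf2 all_cat; apply/andP; split; last first.
  exact: IH (relabelling_track l hp).
case: hp => hp p_inj; case: l => g b; rewrite /rs_letter /=; case: ifP => // hv.
have /andP [/hp /andP [hi1 hn1] /hp /andP [hi2 hn2]] :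
    valid_ix n (idx1 g) && valid_ix n (idx1 g).+1.
  by move: hv; rewrite /valid1 /valid_ix; lia.
have hne : p (idx1 g) != p (idx1 g).+1 by rewrite (inj_eq p_inj); lia.
by case: g hv hi1 hn1 hi2 hn2 hne => i hv /=; case: b => /=; rewrite ?andbT => *; lia.
Qed.

Lemma rs_pw_S p i w : valid1 n i ->
  rs n p (pw (Sg i :: w)) = (Mu (p i) (p i.+1), false) :: rs n (p \o swap i) (pw w).
Proof. by move=> hi; rewrite /= /rs_letter /track /= hi. Qed.

Lemma rs_pw_T p i w : valid1 n i ->
  rs n p (pw (Tg i :: w)) = (Ga (p i) (p i.+1), false) :: rs n (p \o swap i) (pw w).
Proof. by move=> hi; rewrite /= /rs_letter /track /= hi. Qed.

Lemma rel2_instance xs L R : uniq xs -> all (valid_ix n) xs -> rel1 n L R ->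
  exists p, (forall i, i < size xs -> p i.+1 = nth 0 xs i) /\ C (ev (rs n p L)) (ev (rs n p R)).
Proof.
move=> hu hxs hr; have [s [hs hsxs]] := @swaps_realise n (size xs) xs 1 erefl isT hu hxs.
exists (swaps s); split; first by move=> i; rewrite -add1n; exact: hsxs.
by apply: rel1_transfer hr; apply: sub_all hs.
Qed.

Lemma dist2_facts i j : valid_ix n i -> valid_ix n j -> i != j ->
  [/\ uniq [:: i; j], all (valid_ix n) [:: i; j] & valid1 n 1].
Proof.
by move=> hi hj hij; split; rewrite /= ?inE ?hi ?hj //; move: hi hj; rewrite /valid_ix /valid1; lia.
Qed.

Lemma dist3_facts i j k : valid_ix n i -> valid_ix n j -> valid_ix n k -> dist3 i j k ->
  [/\ uniq [:: i; j; k], all (valid_ix n) [:: i; j; k], valid1 n 1 & valid1 n 2].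
Proof.
move=> hi hj hk hd; split; rewrite /= ?inE ?hi ?hj ?hk //;
  by move: hi hj hk hd; rewrite /valid_ix /valid1 /dist3; lia.
Qed.

Lemma dist4_facts i j k l :
  valid_ix n i -> valid_ix n j -> valid_ix n k -> valid_ix n l -> dist4 i j k l ->
  [/\ uniq [:: i; j; k; l], all (valid_ix n) [:: i; j; k; l], valid1 n 1 & valid1 n 3].
Proof.
move=> hi hj hk hl hd; split; rewrite /= ?inE ?hi ?hj ?hk ?hl //;
  by move: hi hj hk hl hd; rewrite /valid_ix /valid1 /dist4 /dist3; lia.
Qed.

(* Computes both rewritten sides and substitutes the chosen strands. *)
Ltac rewritten_relation hp :=
  rewrite !(rs_pw_S, rs_pw_T) // /swap /= ?(hp 0) ?(hp 1) ?(hp 2) ?(hp 3) //=;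
  first [by [] | by move/cong_sym].

(* Each relation of VSPG_n is the rewriting of a relation of VSG_n at the strands
   1, 2 (and 3 or 4), relabelled to the strands [i, j, k, l]. *)
Lemma ev_rel2 u v : rel2 n u v -> C (ev u) (ev v).
Proof.
case=> [i j k hi hj hk|i j k hi hj hk|i j k hi hj hk|i j hi hj|i j k l hi hj hk hl
       |i j k l hi hj hk hl|i j k l hi hj hk hl].
- case/(dist3_facts hi hj hk) => hu hxs hv1 hv2.
  by have [p [hp]] := rel2_instance hu hxs (r1_sss hv1 hv2 isT); rewritten_relation hp.
- case/(dist3_facts hi hj hk) => hu hxs hv1 hv2.
  by have [p [hp]] := rel2_instance hu hxs (r1_sst hv1 hv2 isT); rewritten_relation hp.
- case/(dist3_facts hi hj hk) => hu hxs hv1 hv2.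
  by have [p [hp]] := rel2_instance hu hxs (r1_sst hv2 hv1 isT); rewritten_relation hp.
- case/(dist2_facts hi hj) => hu hxs hv1.
  by have [p [hp]] := rel2_instance hu hxs (r1_st hv1); rewritten_relation hp.
- case/(dist4_facts hi hj hk hl) => hu hxs hv1 hv3.
  have := @r1_far n (Sg 1) (Sg 3) hv1 hv3 isT.
  by move/(rel2_instance hu hxs) => [p [hp]]; rewritten_relation hp.
- case/(dist4_facts hi hj hk hl) => hu hxs hv1 hv3.
  have := @r1_far n (Tg 1) (Tg 3) hv1 hv3 isT.
  by move/(rel2_instance hu hxs) => [p [hp]]; rewritten_relation hp.
- case/(dist4_facts hi hj hk hl) => hu hxs hv1 hv3.
  have := @r1_far n (Sg 1) (Tg 3) hv1 hv3 isT.
  by move/(rel2_instance hu hxs) => [p [hp]]; rewritten_relation hp.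
Qed.

Lemma ev_cong u v : cong (rel2 n) u v -> C (ev u) (ev v).
Proof.
elim=> {u v} [u v /ev_rel2 //|g b||u v _ /cong_sym //|u v w _ IH1 _ IH2|u u' v v' _ IH1 _ IH2].
- rewrite /ev /= cats0 /ev_letter /=; case: b => /=; last exact: cong_mulV.
  by rewrite -{2}(winvK (pw (fusing g))); exact: cong_mulV.
- by move=> u; exact: cong_refl.
- exact: cong_trans IH1 IH2.
- by rewrite !ev_cat; exact: cong_cat.
Qed.

Lemma ker_decomposition w : 0 < n -> wf1 n w -> in_ker w -> C w (ev (rs n id w)).
Proof.
move=> hn hw hk; have := @rs_decomposition n w [::] hw isT; rewrite /vword /= => hd.
have htriv : pcong n (map Vg (idxs w)) [::].
  apply: (@vword_trivial n n.-1); first lia.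
    by rewrite /idxs all_map; apply: sub_all hw => l; rewrite /valid1 /=; lia.
  by move=> x; rewrite -piwE; exact: hk.
apply: (cong_trans hd); apply: (cong_ctxE (a := ev (rs n id w)) (b := [::]) _ _ htriv).
  by rewrite cats0.
by rewrite /= cats0.
Qed.

End Relations.

Unset Implicit Arguments.

Theorem mainTheorem7 (n : nat) (hn : 2 <= n) :
  (forall u : word gen2, wf2 n u -> in_ker (ev u)) /\
  (forall u u' : word gen2, wf2 n u -> wf2 n u' ->
     (cong (rel2 n) u u' <-> cong (rel1 n) (ev u) (ev u'))) /\
  (forall w : word gen1, wf1 n w -> in_ker w ->
     exists u : word gen2, wf2 n u /\ cong (rel1 n) (ev u) w).
Proof.
have id_relabelling : relabelling n id by split.
split; [|split].
- by move=> u _; exact: ev_in_ker.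
- move=> u u' hu hu'; split; first exact: ev_cong.
  by move/rs_cong/(_ id id_relabelling); rewrite !rs_evK.
- move=> w hw hk; exists (rs n id w); split; first exact: rs_wf.
  by apply/cong_sym/ker_decomposition => //; lia.
Qed.
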